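(* Let $X:\mathbb{N}\to\mathbf{Set}_*$ be a tower of pointed sets. Then the functors $G(X,-),H(X,-):\mathbf{Ab}\to\mathbf{Ab}$ are left exact. If moreover $X$ satisfies the Mittag-Leffler condition, then $G(X,-)$ and $H(X,-)$ are exact.
   Context: $\mathbb{N}$ is regarded as a category with a single morphism $n\to m$ whenever $n\ge m$; $\phi_{n,m}:X(n)\to X(m)$ are the structure maps. For a pointed set $Y$, $Y\wedge A:=\bigoplus_{Y\setminus\{*\}}A$ (finitely supported pointed maps $Y\to A$), functorial in $Y$ via $f_*(sv)=f(s)v$ and in $A$ coordinatewise, where $sv$ is the element with value $v$ at $s$ ($*v=0$). $G(X,A):=\lim_\mathbb{N}(X\wedge A)$; $K(X,A)$ is the image of the injective natural map $\rho:(\lim_\mathbb{N}X)\wedge A\to G(X,A)$, $\rho(xv)(n)=x(n)v$; $H(X,A):=G(X,A)/K(X,A)$. $X$ satisfies the Mittag-Leffler condition if for every $n$ there is $s\ge n$ such that $\mathrm{Im}(X(s)\to X(n))=\mathrm{Im}(X(r)\to X(n))$ for all $r\ge s$. *)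

From HB Require Import structures.
From mathcomp Require Import all_boot all_order all_algebra.
From mathcomp Require Import boolp classical_sets functions cardinality fsbigop.
Import Order.TTheory GRing.Theory.
Local Open Scope classical_set_scope.
Local Open Scope ring_scope.

(** A tower of pointed sets X : N -> Set_* , given by its carriers, base
    points and the structure maps phi_{n+1,n} (which generate all phi_{n,m}). *)
Record tower := Tower {
  carrier : nat -> Type;
  pt : forall n, carrier n;
  bond : forall n, carrier n.+1 -> carrier n;
  bond_pt : forall n, bond n (pt n.+1) = pt n }.
Arguments carrier t n : clear implicits.
Arguments pt t n : clear implicits.
Arguments bond t n _ : clear implicits.
Arguments bond_pt t n : clear implicits.

Unset Printing Implicit Defensive.

Fixpoint tmap (X : tower) (n k : nat) : carrier X (k + n) -> carrier X n :=
  match k return carrier X (k + n) -> carrier X n with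
  | 0 => fun x => x
  | k'.+1 => fun x => @tmap X n k' (bond X (k' + n) x)
  end.

Definition tim (X : tower) (n k : nat) : set (carrier X n) :=
  [set tmap X n k x | x in [set: carrier X (k + n)]].

(** Mittag-Leffler: for every n there is s = n + j >= n such that for all
    r = n + k >= s, Im(X(r) -> X(n)) = Im(X(s) -> X(n)). *)
Definition mittag_leffler (X : tower) : Prop :=
  forall n, exists j, forall k, (j <= k)%N -> tim X n k = tim X n j.

(** Y /\ A : finitely supported pointed maps Y -> A (value 0 at the base point). *)
Definition wedge (Y : Type) (y0 : Y) (A : zmodType) : set (Y -> A) :=
  [set u | u y0 = 0 /\ finite_set [set y | u y != 0]].

(** functoriality in Y: f_* (s v) = f(s) v, extended additively:
    (f_* u)(z) = sum_{f(y) = z} u(y) for z <> *, and 0 at the base point. *)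
Definition push (Y Z : Type) (z0 : Z) (A : zmodType) (f : Y -> Z) (u : Y -> A)
  : Z -> A :=
  fun z => if `[< z = z0 >] then 0
           else \sum_(y \in [set y : {classic Y} | f y = z]) u y.

Definition seqfun (X : tower) (A : zmodType) := forall n, carrier X n -> A.

(** G(X,A) = lim_N (X /\ A): compatible families. *)
Definition Gset (X : tower) (A : zmodType) : set (seqfun X A) :=
  [set u | (forall n, wedge (carrier X n) (pt X n) A (u n)) /\
           (forall n, push (carrier X n.+1) (carrier X n) (pt X n) A (bond X n) (u n.+1) = u n)].

Definition limT (X : tower) :=
  {x : forall n, carrier X n | forall n, bond X n (x n.+1) = x n}.
Definition limpt (X : tower) : limT X :=
  exist (fun x : forall n, carrier X n => forall n, bond X n (x n.+1) = x n)
    (fun n => pt X n) (bond_pt X).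

(** rho : (lim X) /\ A -> G(X,A), rho(x v)(n) = x(n) v (extended additively),
    i.e. rho(w)(n) = (pi_n)_* w. *)
Definition rho (X : tower) (A : zmodType) (w : limT X -> A) : seqfun X A :=
  fun n => push (limT X) (carrier X n) (pt X n) A (fun x : limT X => proj1_sig x n) w.

(** K(X,A) = image of rho. H(X,A) = G(X,A)/K(X,A). *)
Definition Kset (X : tower) (A : zmodType) : set (seqfun X A) :=
  [set rho X A w | w in wedge (limT X) (limpt X) A].

Definition Gmap (X : tower) (A B : zmodType) (f : A -> B) (u : seqfun X A)
  : seqfun X B := fun n t => f (u n t).
Arguments Gmap {X A B} f u.

Definition sfzero (X : tower) (A : zmodType) : seqfun X A := fun _ _ => 0.
Definition sfsub (X : tower) (A : zmodType) (u v : seqfun X A) : seqfun X A :=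
  fun n t => u n t - v n t.
Arguments sfsub {X A} u v.

Definition left_exact_seq (A B C : zmodType) (f : A -> B) (g : B -> C) : Prop :=
  injective f /\ (forall b, g b = 0 <-> exists a, f a = b).
Definition short_exact_seq (A B C : zmodType) (f : A -> B) (g : B -> C) : Prop :=
  left_exact_seq A B C f g /\ (forall c, exists b, g b = c).
Arguments left_exact_seq {A B C} f g.
Arguments short_exact_seq {A B C} f g.

(** G(X,-) is well defined on f (G(X,f) maps G(X,A) into G(X,B), and
    K(X,A) into K(X,B), so H(X,f) = G(X,f) mod K is well defined). *)
Definition G_welldef (X : tower) (A B : zmodType) (f : A -> B) : Prop :=
  (forall u, Gset X A u -> Gset X B (Gmap f u)) /\
  (forall u, Kset X A u -> Kset X B (Gmap f u)).
Arguments G_welldef X {A B} f.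

Definition G_left_exact (X : tower) (A B C : zmodType) (f : A -> B) (g : B -> C)
  : Prop :=
  (forall u, Gset X A u -> Gmap f u = sfzero X B -> u = sfzero X A) /\
  (forall u, Gset X A u -> Gmap g (Gmap f u) = sfzero X C) /\
  (forall v, Gset X B v -> Gmap g v = sfzero X C ->
     exists u, Gset X A u /\ Gmap f u = v).
Arguments G_left_exact X {A B C} f g.

Definition G_surj (X : tower) (B C : zmodType) (g : B -> C) : Prop :=
  forall w, Gset X C w -> exists v, Gset X B v /\ Gmap g v = w.
Arguments G_surj X {B C} g.

(** 0 -> H(X,A) -> H(X,B) -> H(X,C) exact, with H = G/K written out:
    the class [u] of u in G(X,A) is zero iff u lies in K(X,A). *)
Definition H_left_exact (X : tower) (A B C : zmodType) (f : A -> B) (g : B -> C)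
  : Prop :=
  (forall u, Gset X A u -> Kset X B (Gmap f u) -> Kset X A u) /\
  (forall u, Gset X A u -> Kset X C (Gmap g (Gmap f u))) /\
  (forall v, Gset X B v -> Kset X C (Gmap g v) ->
     exists u, Gset X A u /\ Kset X B (sfsub v (Gmap f u))).
Arguments H_left_exact X {A B C} f g.

Definition H_surj (X : tower) (B C : zmodType) (g : B -> C) : Prop :=
  forall w, Gset X C w -> exists v, Gset X B v /\ Kset X C (sfsub w (Gmap g v)).
Arguments H_surj X {B C} g.

(** All constructions are pointwise in the coefficient group, so everything
    reduces to two facts about the pushforward [push f u] of a finitely
    supported pointed function [u] along a map [f] (the functoriality
    [f_*] of [Y /\ A] in [Y]):
    - it is additive, functorial ([(h o f)_* = h_* o f_*]), commutes with
      additive maps of coefficients, and is supported in the image of the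
      support of [u];
    - for [w] finitely supported on [lim X], every nonzero coefficient [w x]
      reappears as [rho(w)(n)(x(n))] for [n] large, since the finitely many
      points of the support of [w] are separated at a finite level.
    Left exactness of G(X,-) is then pointwise; for H(X,-) = G/K, the second
    fact shows that K(X,h u) is the image under h of an element of K.
    Under Mittag-Leffler, the stable images [cap_k Im(X(n+k) -> X(n))] map
    onto each other, so a compatible family of lifts of [w in G(X,C)]
    supported on stable points is built level by level (dependent choice),
    correcting at each level by pushing the defect along a section of
    [X(n+1) -> X(n)] over the stable points.  This gives surjectivity of
    G(X,B) -> G(X,C), and H(X,B) -> H(X,C) follows. *)

From HB Require Import structures.
From mathcomp Require Import all_boot all_order all_algebra.
From mathcomp Require Import boolp classical_sets functions cardinality fsbigop.
Import GRing.Theory.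
Local Open Scope classical_set_scope.
Local Open Scope ring_scope.
Set Implicit Arguments.
Unset Strict Implicit.

Definition supp {A : zmodType} {T : Type} (u : T -> A) : set T := [set t | u t != 0].

Lemma finite_supp_map (A B : zmodType) (T : Type) (h : A -> B) (u : T -> A) :
  h 0 = 0 -> finite_set (supp u) -> finite_set (supp (fun t => h (u t))).
Proof. by move=> h0; apply: sub_finite_set => t /=; apply: contraNneq => ->; rewrite h0. Qed.

Lemma finite_supp_map2 (A B C : zmodType) (T : Type) (h : A -> B -> C)
    (u : T -> A) (v : T -> B) :
  h 0 0 = 0 -> finite_set (supp u) -> finite_set (supp v) ->
  finite_set (supp (fun t => h (u t) (v t))).
Proof.
move=> h00 fu fv; apply: (@sub_finite_set _ _ (supp u `|` supp v)).
  2: by rewrite finite_setU.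
move=> t /= huv; apply: contrapT => /not_orP[/negP/negPn/eqP u0 /negP/negPn/eqP v0].
by rewrite /supp /= u0 v0 h00 eqxx in huv.
Qed.

(** A finite set is listed by a duplicate-free sequence; this turns the
    finitely supported sums of [push] into ordinary big sums. *)
Lemma finite_enum (T : Type) (S : set T) : finite_set S ->
  exists r : seq {classic T}, uniq r /\ forall t, S t <-> t \in r.
Proof.
move=> fS; exists (finmap.enum_fset (fset_set (S : set {classic T}))).
split; first exact: finmap.fset_uniq.
by move=> t; rewrite (@in_fset_set {classic T} S fS) in_setE.
Qed.

Section Pushforward.
Variable A : zmodType.

Lemma push_pt (Y Z : Type) (z0 : Z) (f : Y -> Z) (u : Y -> A) :
  push Y Z z0 A f u z0 = 0.
Proof. by rewrite /push; case: asboolP. Qed.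

Lemma push_seq (Y Z : Type) (z0 : Z) (f : Y -> Z) (u : Y -> A)
    (r : seq {classic Y}) (z : Z) :
  uniq r -> (forall y, u y != 0 -> y \in r) -> z <> z0 ->
  push Y Z z0 A f u z = \sum_(y <- r | `[< f y = z >]) u y.
Proof.
move=> ur hr nz; rewrite /push; case: asboolP => // _.
rewrite (@fsbigE _ _ _ {classic Y} _ (filter (fun y : {classic Y} => `[< f y = z >]) r)).
- rewrite big_filter_cond; apply: eq_bigl => y.
  by case: asboolP => h; rewrite ?andbF /= ?andbT //; apply: mem_set.
- exact: filter_uniq.
- by move=> y /=; rewrite mem_filter => /andP[/asboolP].
- move=> y fy; rewrite mem_filter; apply: contraNeq => uy.
  by rewrite hr // andbT; apply/asboolP.
Qed.

Lemma push_nz (Y Z : Type) (z0 : Z) (f : Y -> Z) (u : Y -> A) (z : Z) :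
  push Y Z z0 A f u z != 0 -> z <> z0 /\ exists y, f y = z /\ u y != 0.
Proof.
rewrite /push; case: asboolP => [_|nz h]; first by rewrite eqxx.
split => //; apply: contra_notP (negP h) => none; apply/eqP; apply: fsbig1 => y /= fy.
by apply/eqP; apply: contra_notT none => uy; exists y.
Qed.

Lemma push_fin (Y Z : Type) (z0 : Z) (f : Y -> Z) (u : Y -> A) :
  finite_set (supp u) -> finite_set (supp (push Y Z z0 A f u)).
Proof.
move=> fu; apply: (sub_finite_set _ (finite_image f fu)) => z hz.
by have [_ [y [fy uy]]] := push_nz hz; exists y.
Qed.

Lemma push_zero (Y Z : Type) (z0 : Z) (f : Y -> Z) :
  push Y Z z0 A f (fun _ => 0) = fun _ => 0.
Proof. by apply: funext => z; rewrite /push; case: asboolP => // _; exact: fsbig1. Qed.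

Lemma push_add (Y Z : Type) (z0 : Z) (f : Y -> Z) (u v : Y -> A) :
  finite_set (supp u) -> finite_set (supp v) ->
  push Y Z z0 A f (fun y => u y + v y) =
  fun z => push Y Z z0 A f u z + push Y Z z0 A f v z.
Proof.
move=> fu fv; have [|r [ur hr]] := @finite_enum _ (supp u `|` supp v).
  by rewrite finite_setU.
have hu y : u y != 0 -> y \in r by move=> h; apply/hr; left.
have hv y : v y != 0 -> y \in r by move=> h; apply/hr; right.
have huv y : u y + v y != 0 -> y \in r.
  move=> h; apply/hr; have [u0|] := eqVneq (u y) 0; last by left.
  by right; move: h; rewrite u0 add0r.
apply: funext => z; have [->|nz] := pselect (z = z0); first by rewrite !push_pt addr0.
by rewrite !(push_seq f ur) // -big_split.
Qed.

Lemma sum_pick (T : eqType) (r : seq T) (u : T -> A) (a : T) :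
  uniq r -> (u a != 0 -> a \in r) ->
  \sum_(x <- r) (if x == a then u x else 0) = u a.
Proof.
move=> ur ha; have [ar|nar] := boolP (a \in r).
  by rewrite (bigD1_seq a) //= eqxx big1 ?addr0 // => i /negPf ->.
have -> : u a = 0 by apply/eqP; apply: contraNT nar.
by rewrite big1_seq // => i /andP[_ ir]; case: eqP => // eia; rewrite -eia ir in nar.
Qed.

Lemma push_id (Y : Type) (y0 : Y) (f : Y -> Y) (u : Y -> A) :
  finite_set (supp u) -> u y0 = 0 -> (forall y, u y != 0 -> f y = y) ->
  push Y Y y0 A f u = u.
Proof.
move=> fu u0 hf; have [r [ur hr]] := finite_enum fu.
apply: funext => y; have [->|ny] := pselect (y = y0); first by rewrite push_pt u0.
rewrite (push_seq f ur (fun y h => (hr y).1 h) ny) big_mkcond /=.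
rewrite -(@sum_pick {classic Y} r u y ur); last by move=> h; apply/hr.
apply: eq_bigr => x _; have [ux0|uxn] := eqVneq (u x) 0.
  by rewrite ux0; case: ifP; case: ifP.
by rewrite (hf _ uxn); case: asboolP => [->|nxy]; [rewrite eqxx | case: eqP].
Qed.

Lemma push_comp (Y Z W : Type) (z0 : Z) (w0 : W) (f : Y -> Z) (h : Z -> W)
    (u : Y -> A) :
  finite_set (supp u) -> h z0 = w0 ->
  push Z W w0 A h (push Y Z z0 A f u) = push Y W w0 A (fun y => h (f y)) u.
Proof.
move=> fu hz0; have [r [ur hr]] := finite_enum fu.
have hr' y : u y != 0 -> y \in r by move=> hy; apply/hr.
pose s : seq {classic Z} := undup (map (f : {classic Y} -> {classic Z}) r).
have us : uniq s by exact: undup_uniq.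
have hs z : push Y Z z0 A f u z != 0 -> z \in s.
  move=> hz; have [_ [y [<- uy]]] := push_nz hz; rewrite (@mem_undup {classic Z}); apply/mapP.
  by exists y => //; apply: hr'.
apply: funext => w; have [->|nw] := pselect (w = w0); first by rewrite !push_pt.
rewrite (push_seq h us hs nw) (push_seq _ ur hr' nw).
rewrite (eq_bigr (fun z => \sum_(y <- r) (if `[< f y = z >] then u y else 0))); last first.
  move=> z hz; rewrite (push_seq f ur hr') ?big_mkcond //.
  by move=> ez; move/asboolP: hz; rewrite ez hz0 => /esym.
rewrite big_mkcond /= (eq_bigr (fun z => \sum_(y <- r)
    (if `[< h z = w >] then (if `[< f y = z >] then u y else 0) else 0))); last first.
  by move=> z _; case: ifP => // _; rewrite big1.
rewrite exchange_big /= [RHS]big_mkcond /=; apply: eq_bigr => y _.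
rewrite (eq_bigr (fun z : {classic Z} => if z == (f y : {classic Z})
    then (if `[< h (f y) = w >] then u y else 0) else 0)); last first.
  move=> z _; case: eqP => [->|nzf]; first by case: asboolP => // _; case: asboolP.
  by case: asboolP => _ //; case: asboolP => // e; case: nzf.
rewrite (sum_pick (u := fun _ => if `[< h (f y) = w >] then u y else 0)) // => hn.
rewrite (@mem_undup {classic Z}); apply/mapP; exists y => //; apply: hr'.
by apply: contraNneq hn => ->; case: ifP.
Qed.

End Pushforward.

Lemma push_morph (A B : zmodType) (h : {additive A -> B}) (Y Z : Type) (z0 : Z)
    (f : Y -> Z) (u : Y -> A) (z : Z) :
  finite_set (supp u) ->
  push Y Z z0 B f (fun y => h (u y)) z = h (push Y Z z0 A f u z).
Proof.
move=> fu; have [r [ur hr]] := finite_enum fu.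
have hr' y : u y != 0 -> y \in r by move=> hy; apply/hr.
have [->|nz] := pselect (z = z0); first by rewrite !push_pt raddf0.
rewrite (push_seq f ur hr' nz) (push_seq f ur) // ?raddf_sum // => y hy.
by apply: hr'; apply: contraNneq hy => ->; rewrite raddf0.
Qed.

Lemma wedge_map (A B : zmodType) (h : {additive A -> B}) (T : Type) (t0 : T)
    (u : T -> A) :
  wedge T t0 A u -> wedge T t0 B (fun t => h (u t)).
Proof.
by move=> [u0 fu]; split; [rewrite u0 raddf0 | exact: finite_supp_map (raddf0 h) fu].
Qed.

Section GroupsOfFamilies.
Variable X : tower.

Lemma sfE (A : zmodType) (u v : seqfun X A) : (forall n t, u n t = v n t) -> u = v.
Proof.
by move=> e; apply: functional_extensionality_dep => n; apply: funext => t; apply: e.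
Qed.

Lemma Gmap_G (A B : zmodType) (h : {additive A -> B}) (u : seqfun X A) :
  Gset X A u -> Gset X B (Gmap h u).
Proof.
move=> [hw hc]; split => n; first exact: wedge_map.
by apply: funext => z; rewrite /Gmap push_morph ?hc //; exact: (hw n.+1).2.
Qed.

Lemma Gset_sub (A : zmodType) (u v : seqfun X A) :
  Gset X A u -> Gset X A v -> Gset X A (sfsub u v).
Proof.
move=> [hu cu] [hv cv]; split => n.
  split; first by rewrite /sfsub (hu n).1 (hv n).1 subr0.
  apply: (finite_supp_map2 (h := fun a b => a - b)); first exact: subr0.
    exact: (hu n).2.
  exact: (hv n).2.
have fv := (hv n.+1).2; have fnv := finite_supp_map (raddf0 (-%R : {additive A -> A})) fv.
rewrite /sfsub (push_add _ _ (hu n.+1).2 fnv); apply: funext => z.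
by rewrite (push_morph (-%R : {additive A -> A})) // cu cv.
Qed.

Lemma Gset_inj (A B : zmodType) (f : {additive A -> B}) (u : seqfun X A) :
  injective f -> Gset X B (Gmap f u) -> Gset X A u.
Proof.
move=> fi [hw hc].
have fu n : finite_set (supp (u n)).
  apply: sub_finite_set (hw n).2 => t /=; rewrite /Gmap.
  by apply: contraNneq => /eqP; rewrite -(raddf0 f) => /eqP/fi ->.
split => n; first by split => //; apply: fi; rewrite raddf0 -(hw n).1.
apply: funext => z; apply: fi.
by have := congr1 (fun F => F z) (hc n); rewrite /Gmap push_morph.
Qed.

Lemma rho_G (A : zmodType) (w : limT X -> A) :
  wedge (limT X) (limpt X) A w -> Gset X A (rho X A w).
Proof.
move=> [w0 fw]; split => n; first by split; [exact: push_pt | exact: push_fin].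
rewrite /rho (push_comp _ fw (bond_pt X n)).
by congr push; apply: funext => x; exact: (proj2_sig x n).
Qed.

Lemma Gmap_rho (A B : zmodType) (h : {additive A -> B}) (w : limT X -> A) :
  finite_set (supp w) -> Gmap h (rho X A w) = rho X B (fun x => h (w x)).
Proof. by move=> fw; apply: sfE => n t; rewrite /Gmap /rho push_morph. Qed.

Lemma rho0 (A : zmodType) : Kset X A (sfzero X A).
Proof.
exists (fun _ => 0); last by apply: functional_extensionality_dep => n; rewrite /rho push_zero.
split => //; apply: (@sub_finite_set _ _ set0); last exact: finite_set0.
by move=> x; rewrite /supp /= eqxx.
Qed.

End GroupsOfFamilies.

Section LimitPoints.
Variable X : tower.

Lemma lim_eq_down (x y : limT X) (n k : nat) :
  proj1_sig x (k + n)%N = proj1_sig y (k + n)%N -> proj1_sig x n = proj1_sig y n.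
Proof.
elim: k => [|k IH] // e; apply: IH.
by rewrite -(proj2_sig x (k + n)%N) -(proj2_sig y (k + n)%N) /= e.
Qed.

Lemma lim_sep (x y : limT X) : x <> y ->
  exists n, forall m, (n <= m)%N -> proj1_sig x m <> proj1_sig y m.
Proof.
move=> nxy; have [n ne] : exists n, proj1_sig x n <> proj1_sig y n.
  apply: contra_notP nxy; case: x y => [x hx] [y hy] /= nh.
  have exy : x = y.
    apply: functional_extensionality_dep => n; apply: contra_notP nh => ne.
    by exists n.
  by subst y; congr exist; exact: Prop_irrelevance.
exists n => m nm e; apply: ne; apply: (@lim_eq_down _ _ _ (m - n)%N); by rewrite subnK.
Qed.

Lemma lim_sep_seq (x : limT X) (r : seq {classic (limT X)}) :
  exists N, forall y, y \in r -> y <> x ->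
    forall m, (N <= m)%N -> proj1_sig y m <> proj1_sig x m.
Proof.
elim: r => [|a r [N hN]]; first by exists 0%N.
have [ax|ax] := pselect (a = x).
  by exists N => y; rewrite in_cons => /orP[/eqP -> //|]; exact: hN.
have [M hM] := lim_sep ax; exists (maxn N M) => y.
rewrite in_cons => /orP[/eqP -> _|yr yx] m; rewrite geq_max => /andP[Nm Mm].
  exact: hM.
exact: hN.
Qed.

(** Every nonzero coefficient of [w] is recovered from [rho w] at a
    sufficiently high level: no other point of the support collides. *)
Lemma rho_coef (A : zmodType) (w : limT X -> A) :
  wedge (limT X) (limpt X) A w ->
  forall x, w x != 0 -> exists n, rho X A w n (proj1_sig x n) = w x.
Proof.
move=> [w0 fw] x wx; have [r [ur hr]] := finite_enum fw.
have hr' y : w y != 0 -> y \in r by move=> hy; apply/hr.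
have [N hN] := lim_sep_seq x (limpt X :: r).
have xpt : proj1_sig x N <> pt X N.
  apply: not_eq_sym; apply: (hN (limpt X)) => //; first by rewrite mem_head.
  by move=> e; rewrite -e w0 eqxx in wx.
exists N; rewrite /rho (push_seq _ ur hr' xpt) big_mkcond /=.
rewrite -(@sum_pick _ _ r w x ur (fun _ => hr' x wx)); apply: eq_big_seq => y yr.
have [->|yx] := pselect (y = x); first by rewrite eqxx; case: asboolP.
have -> : (y == x :> {classic (limT X)}) = false by apply/eqP.
by case: asboolP => // e; exfalso; apply: (hN y _ yx N) => //; rewrite in_cons yr orbT.
Qed.

End LimitPoints.

Definition choose_preimage (B C : Type) (b0 : B) (g : B -> C) (c : C) : B :=
  match pselect (exists b, g b = c) with
  | left h => proj1_sig (cid h)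
  | right _ => b0 end.

Lemma choose_preimageP (B C : Type) (b0 : B) (g : B -> C) (c : C) :
  (exists b, g b = c) -> g (choose_preimage b0 g c) = c.
Proof. by rewrite /choose_preimage; case: pselect => // h _; exact: (proj2_sig (cid h)). Qed.

Lemma lift_wedge (B C : zmodType) (g : {additive B -> C}) (T : Type) (t0 : T)
    (w : T -> C) :
  wedge T t0 C w -> (forall t, exists b, g b = w t) ->
  exists w', [/\ wedge T t0 B w', forall t, g (w' t) = w t &
                 forall t, w' t != 0 -> w t != 0].
Proof.
move=> [w0 fw] hw; exists (fun t => if w t == 0 then 0 else choose_preimage 0 g (w t)).
have supp_w' t : (if w t == 0 then 0 else choose_preimage 0 g (w t)) != 0 -> w t != 0.
  by case: ifP; rewrite ?eqxx.
split => //.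
- by split; [rewrite w0 eqxx | exact: sub_finite_set supp_w' fw].
- by move=> t; case: eqP => [->|_]; [rewrite raddf0 | exact: choose_preimageP].
Qed.

Section LeftExactness.
Variable X : tower.

Lemma G_welldef_additive (A B : zmodType) (h : {additive A -> B}) : G_welldef X h.
Proof.
split=> [u|u [w hw <-]]; first exact: Gmap_G.
exists (fun x => h (w x)); first exact: wedge_map.
by rewrite Gmap_rho //; case: hw.
Qed.

Lemma Gmap_inj (A B : zmodType) (f : {additive A -> B}) :
  injective f -> injective (@Gmap X A B f).
Proof.
by move=> fi u v e; apply: sfE => n t; apply: fi; apply: (congr1 (fun F => F n t) e).
Qed.

Lemma Gmap_sub (A B : zmodType) (h : {additive A -> B}) (u v : seqfun X A) :
  Gmap h (sfsub u v) = sfsub (Gmap h u) (Gmap h v).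
Proof. by apply: sfE => n t; rewrite /Gmap /sfsub raddfB. Qed.

(** If [h u] lies in K(X,B), then [h u = h (rho w)] for some [w] in
    [(lim X) /\ A]: the coefficients of the witness lie in the image of [h]
    by [rho_coef]. *)
Lemma K_lift (A B : zmodType) (h : {additive A -> B}) (u : seqfun X A) :
  Kset X B (Gmap h u) ->
  exists w, wedge (limT X) (limpt X) A w /\ Gmap h u = Gmap h (rho X A w).
Proof.
move=> [w hw ew].
have hw' x : exists a, h a = w x.
  have [->|wx] := eqVneq (w x) 0; first by exists 0; rewrite raddf0.
  have [n hn] := rho_coef hw wx; exists (u n (proj1_sig x n)).
  by rewrite -hn ew.
have [w' [ww' hw'' _]] := lift_wedge hw hw'.
exists w'; split => //; rewrite -ew Gmap_rho; last by case: ww'.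
by congr rho; apply: funext.
Qed.

(** 0 -> G(X,A) -> G(X,B) -> G(X,C) is exact; the middle step chooses
    preimages pointwise. *)
Lemma G_preserves_left_exact (A B C : zmodType) (f : {additive A -> B})
    (g : {additive B -> C}) :
  left_exact_seq f g -> G_left_exact X f g.
Proof.
move=> [fi hex]; split; [|split].
- move=> u _ e; apply: (Gmap_inj fi); rewrite e.
  by apply: sfE => n t; rewrite /Gmap raddf0.
- by move=> u _; apply: sfE => n t; apply/hex; exists (u n t).
- move=> v hv hgv; pose u n t := choose_preimage 0 f (v n t).
  have fu : Gmap f u = v.
    apply: sfE => n t; apply: choose_preimageP; apply/hex.
    exact: (congr1 (fun F => F n t) hgv).
  by exists u; split => //; apply: (Gset_inj fi); rewrite fu.
Qed.

Lemma H_preserves_left_exact (A B C : zmodType) (f : {additive A -> B})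
    (g : {additive B -> C}) :
  left_exact_seq f g -> H_left_exact X f g.
Proof.
move=> le; have [fi _] := le; have [_ [gf0 gex]] := G_preserves_left_exact le.
split; [|split].
- move=> u _ /K_lift[w [hw e]]; exists w => //; exact/esym/(Gmap_inj fi e).
- by move=> u hu; rewrite gf0 //; exact: rho0.
- move=> v hv /K_lift[w [hw e]].
  have [|u [hu fu]] := gex _ (Gset_sub hv (rho_G hw)).
    by rewrite Gmap_sub e; apply: sfE => n t; exact: subrr.
  exists u; split => //; exists w => //.
  by rewrite fu; apply: sfE => n t; rewrite /sfsub subKr.
Qed.

Lemma H_surj_of_G_surj (B C : zmodType) (g : {additive B -> C}) :
  G_surj X g -> H_surj X g.
Proof.
move=> gs w hw; have [v [hv <-]] := gs w hw; exists v; split => //.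
have -> : sfsub (Gmap g v) (Gmap g v) = sfzero X C by apply: sfE => n t; exact: subrr.
exact: rho0.
Qed.

End LeftExactness.

Lemma dependent_choice_nat (T : nat -> Type) (P : forall n, T n -> Prop)
    (R : forall n, T n.+1 -> T n -> Prop) :
  (exists x : T 0, P 0 x) ->
  (forall n (x : T n), P n x -> exists y : T n.+1, P n.+1 y /\ R n y x) ->
  exists F : forall n, T n, forall n, P n (F n) /\ R n (F n.+1) (F n).
Proof.
move=> [x0 P0] step.
pose F := fix F n : {x : T n | P n x} :=
  match n return {x : T n | P n x} with
  | 0 => exist _ x0 P0
  | n'.+1 => let y := cid (step n' _ (proj2_sig (F n'))) in
             exist _ (proj1_sig y) (proj2_sig y).1
  end.
exists (fun n => proj1_sig (F n)) => n; split; first exact: proj2_sig (F n).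
exact: (proj2_sig (cid (step n _ (proj2_sig (F n))))).2.
Qed.

Section StableImages.
Variable X : tower.

(** Transport of points along an equality of levels; needed because
    [tmap] is indexed by [k + n]. *)
Definition transport (m p : nat) (e : m = p) (x : carrier X m) : carrier X p :=
  eq_rect m (carrier X) x p e.

Lemma transportK (m p : nat) (e : m = p) (x : carrier X p) :
  transport e (transport (esym e) x) = x.
Proof. by case: p / e x. Qed.

Lemma bond_transport (m p : nat) (e : m.+1 = p.+1) (x : carrier X m.+1) :
  bond X p (transport e x) = transport (eq_add_S _ _ e) (bond X m x).
Proof.
have e' := eq_add_S _ _ e; subst p.
by rewrite (eq_irrelevance e erefl) (eq_irrelevance (eq_add_S _ _ _) erefl).
Qed.

Lemma tmap_succ (k n : nat) (e : (k + n.+1 = k.+1 + n)%N) (x : carrier X (k + n.+1)) :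
  tmap X n k.+1 (transport e x) = bond X n (tmap X n.+1 k x).
Proof.
elim: k n e x => [|k IH] n e x; first by rewrite (eq_irrelevance e erefl).
by rewrite [LHS]/= (bond_transport e); exact: IH.
Qed.

Lemma tim_succ (n k : nat) : tim X n k.+1 = bond X n @` tim X n.+1 k.
Proof.
apply/seteqP; split => z.
  move=> [x _ <-]; exists (tmap X n.+1 k (transport (esym (addnS k n)) x)).
    by exists (transport (esym (addnS k n)) x).
  by rewrite -(tmap_succ (addnS k n)) transportK.
by move=> [_ [x _ <-] <-]; exists (transport (addnS k n) x) => //; rewrite tmap_succ.
Qed.

Lemma tim_antitone (n k k' : nat) : (k <= k')%N -> tim X n k' `<=` tim X n k.
Proof.
move=> /subnK <-; elim: (k' - k)%N => [|d IH] //= z [x _ <-].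
by apply: IH; exists (bond X _ x).
Qed.

Definition stable (n : nat) (z : carrier X n) : Prop := forall k, tim X n k z.

Lemma stable_bond (n : nat) (y : carrier X n.+1) : stable y -> stable (bond X n y).
Proof. by move=> hy k; apply: (tim_antitone (leqnSn k)); rewrite tim_succ; exists y. Qed.

(** Under Mittag-Leffler, every stable point has a stable preimage: if the
    images into [X(n+1)] stabilise from [j] on, a preimage of [z] taken in
    [Im(X(n+1+j) -> X(n+1))] lies in all of them. *)
Lemma stable_lift (n : nat) (z : carrier X n) : mittag_leffler X -> stable z ->
  exists y, stable y /\ bond X n y = z.
Proof.
move=> ml hz; have [j hj] := ml n.+1.
have := hz j.+1; rewrite tim_succ => -[y hy <-]; exists y; split => // k.
have [kj|jk] := leqP k j; first exact: (tim_antitone kj).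
by rewrite hj // ltnW.
Qed.

Lemma stable_section (n : nat) : mittag_leffler X ->
  exists s : carrier X n -> carrier X n.+1,
    forall z, stable z -> stable (s z) /\ bond X n (s z) = z.
Proof.
move=> ml; have [|s hs] := @choice _ _ (fun z y => stable z -> stable y /\ bond X n y = z).
  move=> z; have [hz|nz] := pselect (stable z); last by exists (pt X n.+1).
  by have [y hy] := stable_lift ml hz; exists y.
by exists s.
Qed.

(** Every member of G(X,C) is supported on stable points: a nonzero value
    at level [n] comes from a nonzero value at every higher level. *)
Lemma Gset_stable (C : zmodType) (w : seqfun X C) : Gset X C w ->
  forall n z, w n z != 0 -> stable z.
Proof.
move=> [_ hc] n z wz k; elim: k n z wz => [|k IH] n z wz; first by exists z.
rewrite -(hc n) in wz; have [_ [y [<- wy]]] := push_nz wz.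
by rewrite tim_succ; exists y => //; apply: IH.
Qed.

End StableImages.

Section SurjectivityUnderMittagLeffler.
Variables (X : tower) (B C : zmodType) (g : {additive B -> C}) (w : seqfun X C).
Hypotheses (ml : mittag_leffler X) (g_onto : forall c, exists b, g b = c)
  (wG : Gset X C w).
Arguments w : clear implicits.

Definition stable_lift_at (n : nat) (v : carrier X n -> B) : Prop :=
  [/\ wedge (carrier X n) (pt X n) B v, forall z, v z != 0 -> stable z
    & forall z, g (v z) = w n z].

Lemma stable_lift_exists (n : nat) : exists v : carrier X n -> B, stable_lift_at v.
Proof.
have [v [hv gv sv]] := lift_wedge (wG.1 n) (fun z => g_onto (w n z)).
by exists v; split => // z vz; apply: (Gset_stable wG); exact: sv.
Qed.

(** A stable lift at level [n] is the pushforward of a stable lift at level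
    [n+1]: take any stable lift [v'] and correct it by pushing the defect
    [d = v - phi_* v'], which lies in the kernel of [g] and is supported on
    stable points, along a section over the stable points. *)
Lemma stable_lift_step (n : nat) (v : carrier X n -> B) : stable_lift_at v ->
  exists v1, stable_lift_at v1 /\ push _ _ (pt X n) B (bond X n) v1 = v.
Proof.
move=> [[v0 fv] sv gv]; have [v' [[v'0 fv'] sv' gv']] := stable_lift_exists n.+1.
have [s hs] := stable_section n ml.
pose d z := v z - push _ _ (pt X n) B (bond X n) v' z.
have fd : finite_set (supp d).
  exact: (finite_supp_map2 (h := fun a b => a - b)) (subr0 0) fv (push_fin _ _ fv').
have sd z : d z != 0 -> stable z.
  move=> dz; have [vz|vz] := eqVneq (v z) 0; last exact: sv.
  rewrite /d vz sub0r oppr_eq0 in dz; have [_ [y [<- v'y]]] := push_nz dz.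
  exact/stable_bond/sv'.
have gd z : g (d z) = 0.
  rewrite /d raddfB gv -push_morph // (_ : (fun y => g (v' y)) = w n.+1).
    by rewrite wG.2 subrr.
  exact: funext.
pose c := push _ _ (pt X n.+1) B s d.
exists (fun y => v' y + c y); split; first split.
- split; first by rewrite v'0 /c push_pt addr0.
  exact: (finite_supp_map2 (h := fun a b => a + b)) (addr0 0) fv' (push_fin _ _ fd).
- move=> y hy; have [v'y|v'y] := eqVneq (v' y) 0; last exact: sv'.
  rewrite v'y add0r in hy; have [_ [z [<- dz]]] := push_nz hy.
  exact: (hs _ (sd _ dz)).1.
- move=> y; rewrite raddfD gv' /c -push_morph //.
  by rewrite (_ : (fun z => g (d z)) = fun _ => 0) ?push_zero ?addr0 //; exact: funext.
rewrite push_add //; last exact: push_fin.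
rewrite /c (push_comp _ fd (bond_pt X n)).
have d0 : d (pt X n) = 0 by rewrite /d v0 push_pt subr0.
have s_fixes_d z : d z != 0 -> bond X n (s z) = z by move=> dz; exact: (hs _ (sd _ dz)).2.
by rewrite push_id //; apply: funext => z; rewrite /d addrC subrK.
Qed.

Lemma Gset_lift : exists v, Gset X B v /\ Gmap g v = w.
Proof.
have [v hv] := dependent_choice_nat (stable_lift_exists 0) stable_lift_step.
exists v; split.
  by split => n; [case: (hv n).1 | exact: (hv n).2].
by apply: sfE => n t; case: (hv n).1 => _ _; apply.
Qed.

End SurjectivityUnderMittagLeffler.

Lemma G_surj_of_mittag_leffler (X : tower) (B C : zmodType) (g : {additive B -> C}) :
  mittag_leffler X -> (forall c, exists b, g b = c) -> G_surj X g.
Proof. by move=> ml g_onto w wG; exact: Gset_lift. Qed.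

Theorem mainTheorem12 (X : tower) :
  (forall (A B C : zmodType) (f : {additive A -> B}) (g : {additive B -> C}),
      left_exact_seq f g ->
      [/\ G_welldef X f, G_welldef X g, G_left_exact X f g & H_left_exact X f g])
  /\
  (mittag_leffler X ->
   forall (A B C : zmodType) (f : {additive A -> B}) (g : {additive B -> C}),
      short_exact_seq f g ->
      [/\ G_left_exact X f g, G_surj X g, H_left_exact X f g & H_surj X g]).
Proof.
split=> [A B C f g le | ml A B C f g [le g_onto]].
  split; [exact: G_welldef_additive | exact: G_welldef_additive |
          exact: G_preserves_left_exact | exact: H_preserves_left_exact].
have G_onto : G_surj X g := G_surj_of_mittag_leffler ml g_onto.
split => //; [exact: G_preserves_left_exact | exact: H_preserves_left_exact |
              exact: H_surj_of_G_surj].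
Qed.
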